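(* For every compact subset $K\subset\partial^2\Gamma$ there exists a constant $C$ with the following property. Suppose $\xi,\eta,\eta'\in\partial\Gamma$ and $g\in\Gamma$ satisfy $(\xi,\eta)\in K$, $(\xi,\eta')\in K$, $(g\xi,g\eta)\in K$, and $\sigma(g,\xi)<0$. Put $t=-\sigma(g,\xi)>0$. Then $\sigma(g,\eta)\in[t-C,t+C]$, $\sigma(g,\eta')\in[t-C,t+C]$, and $d_{\partial\Gamma}(g\eta,g\eta')<\alpha^{t-C}$.
   Context: $\Gamma$ is a countable non-elementary group acting properly and cocompactly by isometries on a proper, Gromov-hyperbolic, quasi-convex metric space $(M,d_M)$ (quasi-convex: any two distinct points of $M\sqcup\partial M$ are joined by a $C_0$-almost-geodesic for a uniform $C_0$). $o\in M$ is a fixed base point. $\partial\Gamma=\partial M$ is the Gromov boundary and $\partial^2\Gamma=\{(\xi,\eta):\xi\ne\eta\}$, with its natural topology. Gromov product. $(x|y)_z=\tfrac12(d_M(x,z)+d_M(y,z)-d_M(x,y))$, extended to boundary points by $(\xi|\eta)_o=\inf\liminf_i(x_i|y_i)_o$ over sequences $x_i\to\xi$, $y_i\to\eta$. Visual metric. $d_{\partial\Gamma}$ is a fixed visual metric on $\partial\Gamma$ of the form $d_{\partial\Gamma}(\xi,\eta)=\alpha^{(\xi|\eta)_o+b(\xi,\eta)}$, where $\alpha\in(0,1)$ is a fixed parameter and $b$ is uniformly bounded. Busemann cocycle. $\sigma(g,\xi)=\limsup_{x\to\xi}(d_M(g^{-1}o,x)-d_M(o,x))$. *)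

From Stdlib Require Import Reals List.
Open Scope R_scope.

Section Hyp.
Context {M : Type} (d : M -> M -> R).

Definition is_metric : Prop :=
  (forall x y, 0 <= d x y) /\ (forall x y, d x y = 0 <-> x = y) /\
  (forall x y, d x y = d y x) /\ (forall x y z, d x z <= d x y + d y z).

Definition gprod (w x y : M) : R := (d x w + d y w - d x y) / 2.

Definition gromov_hyperbolic : Prop :=
  exists delta, 0 <= delta /\ forall x y z w,
    Rmin (gprod w x y) (gprod w y z) - delta <= gprod w x z.

Definition proper_space : Prop :=
  forall (x : M) (r : R) (u : nat -> M), (forall n, d x (u n) <= r) ->
    exists (phi : nat -> nat) (y : M), (forall n, (phi n < phi (S n))%nat) /\
      Un_cv (fun n => d (u (phi n)) y) 0.

Variable o : M.

Definition gromov_seq (x : nat -> M) : Prop :=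
  forall N, exists n0, forall m n, (n0 <= m)%nat -> (n0 <= n)%nat ->
    N <= gprod o (x m) (x n).

Definition gromov_equiv (x y : nat -> M) : Prop :=
  forall N, exists n0, forall m n, (n0 <= m)%nat -> (n0 <= n)%nat ->
    N <= gprod o (x m) (y n).

(** A boundary point is an equivalence class of sequences converging to infinity. *)
Definition is_bclass (S : (nat -> M) -> Prop) : Prop :=
  exists x, gromov_seq x /\ forall y, S y <-> (gromov_seq y /\ gromov_equiv x y).

Definition bnd : Type := { S : (nat -> M) -> Prop | is_bclass S }.

Definition conv_to (xi : bnd) (x : nat -> M) : Prop := proj1_sig xi x.

Definition almost_geodesic (C0 : R) (I : R -> Prop) (gam : R -> M) : Prop :=
  forall s t, I s -> I t -> Rabs (d (gam s) (gam t) - Rabs (s - t)) <= C0.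

Definition quasi_convex_space : Prop :=
  exists C0, 0 <= C0 /\
  (forall x y : M, x <> y -> exists a b (gam : R -> M), a <= b /\
      almost_geodesic C0 (fun s => a <= s <= b) gam /\ gam a = x /\ gam b = y) /\
  (forall (x : M) (xi : bnd), exists gam : R -> M,
      almost_geodesic C0 (fun s => 0 <= s) gam /\ gam 0 = x /\
      conv_to xi (fun n => gam (INR n))) /\
  (forall xi eta : bnd, xi <> eta -> exists gam : R -> M,
      almost_geodesic C0 (fun _ => True) gam /\
      conv_to xi (fun n => gam (- INR n)) /\ conv_to eta (fun n => gam (INR n))).

Definition is_liminf (u : nat -> R) (l : R) : Prop :=
  (forall eps, 0 < eps -> exists N, forall n, (N <= n)%nat -> l - eps < u n) /\
  (forall eps, 0 < eps -> forall N, exists n, (N <= n)%nat /\ u n < l + eps).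

Definition is_glb (E : R -> Prop) (m : R) : Prop :=
  (forall v, E v -> m <= v) /\ (forall m', (forall v, E v -> m' <= v) -> m' <= m).

Definition bnd_gprod_spec (gp : bnd -> bnd -> R) : Prop :=
  forall xi eta, xi <> eta ->
    is_glb (fun v => exists x y, conv_to xi x /\ conv_to eta y /\
              is_liminf (fun i => gprod o (x i) (y i)) v) (gp xi eta).

Definition visual_metric (alpha : R) (gp : bnd -> bnd -> R) (dv : bnd -> bnd -> R) : Prop :=
  (forall xi eta, 0 <= dv xi eta) /\ (forall xi eta, dv xi eta = 0 <-> xi = eta) /\
  (forall xi eta, dv xi eta = dv eta xi) /\
  (forall xi eta zeta, dv xi zeta <= dv xi eta + dv eta zeta) /\
  exists B, forall xi eta, xi <> eta ->
    exists b, Rabs b <= B /\ dv xi eta = Rpower alpha (gp xi eta + b).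

(** K ⊂ ∂²Γ is compact (topology of ∂²Γ ⊂ ∂Γ × ∂Γ, ∂Γ metrized by dv). *)
Definition compact2 (dv : bnd -> bnd -> R) (K : bnd -> bnd -> Prop) : Prop :=
  (forall xi eta, K xi eta -> xi <> eta) /\
  forall u v : nat -> bnd, (forall n, K (u n) (v n)) ->
    exists (phi : nat -> nat) xi eta, (forall n, (phi n < phi (S n))%nat) /\
      K xi eta /\ Un_cv (fun n => dv (u (phi n)) xi) 0 /\
      Un_cv (fun n => dv (v (phi n)) eta) 0.

End Hyp.

Definition is_group {G : Type} (mul : G -> G -> G) (one : G) (inv : G -> G) : Prop :=
  (forall a b c, mul a (mul b c) = mul (mul a b) c) /\
  (forall a, mul one a = a) /\ (forall a, mul a one = a) /\
  (forall a, mul (inv a) a = one) /\ (forall a, mul a (inv a) = one).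

Definition isometric_action {G M : Type} (d : M -> M -> R)
  (mul : G -> G -> G) (one : G) (act : G -> M -> M) : Prop :=
  (forall x, act one x = x) /\ (forall g h x, act (mul g h) x = act g (act h x)) /\
  (forall g x y, d (act g x) (act g y) = d x y).

Definition proper_action {G M : Type} (d : M -> M -> R) (act : G -> M -> M) (o : M) : Prop :=
  forall r, exists l : list G, forall g, d o (act g o) <= r -> In g l.

Definition cocompact_action {G M : Type} (d : M -> M -> R) (act : G -> M -> M) (o : M) : Prop :=
  exists r, forall x, exists g, d x (act g o) <= r.

Definition countable_type (G : Type) : Prop :=
  exists f : G -> nat, forall a b, f a = f b -> a = b.

Definition bnd_action_spec {G M : Type} (d : M -> M -> R) (o : M) (act : G -> M -> M)
  (bact : G -> bnd d o -> bnd d o) : Prop :=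
  forall g xi x, conv_to d o xi x -> conv_to d o (bact g xi) (fun n => act g (x n)).

(** Busemann cocycle sigma(g,xi) = limsup_{x -> xi} (d(g^{-1}o,x) - d(o,x)). *)
Definition busemann_spec {G M : Type} (d : M -> M -> R) (o : M) (inv : G -> G)
  (act : G -> M -> M) (sigma : G -> bnd d o -> R) : Prop :=
  forall g xi,
    (forall x, conv_to d o xi x -> forall eps, 0 < eps ->
       exists N, forall n, (N <= n)%nat ->
         d (act (inv g) o) (x n) - d o (x n) < sigma g xi + eps) /\
    (exists x, conv_to d o xi x /\
       Un_cv (fun n => d (act (inv g) o) (x n) - d o (x n)) (sigma g xi)).

Definition non_elementary_bnd {M : Type} (d : M -> M -> R) (o : M) : Prop :=
  exists a b c : bnd d o, a <> b /\ b <> c /\ a <> c.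

(** Along x -> xi and y -> eta, (x|y)_p - (x|y)_o tends to
    (sigma(g,xi) + sigma(g,eta))/2 for p = g^-1 o, and (gx|gy)_o = (x|y)_p.
    The boundary Gromov product is bounded on the compact set K (which stays
    away from the diagonal) and is determined up to 2 delta by products of
    approximating sequences.  Hence (x|y)_p >= 0 gives sigma(g,eta) >= t - C,
    and the bound on (g xi|g eta)_o gives sigma(g,eta) <= t + C; the four-point
    condition at x, p, y then bounds d(o,p) by t + C, which bounds sigma(g,eta')
    from above.  Finally (g eta|g eta')_o >= (sigma(g,eta) + sigma(g,eta'))/2
    - 2 delta >= t - C, which is the visual distance estimate. *)

From Stdlib Require Import Reals List Lra Lia Classical ClassicalEpsilon.
Open Scope R_scope.

Lemma Un_cv_bounds (u : nat -> R) (l eps : R) : Un_cv u l -> 0 < eps ->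
  exists N, forall n, (N <= n)%nat -> l - eps < u n < l + eps.
Proof.
  intros hu heps. destruct (hu eps heps) as [N hN]. exists N. intros n hn.
  specialize (hN n hn). unfold R_dist in hN. apply Rabs_def2 in hN. lra.
Qed.

Lemma Un_cv_le_bound (u : nat -> R) (l b : R) :
  Un_cv u l -> (forall n, u n <= b) -> l <= b.
Proof.
  intros hu hb. apply Rnot_lt_le; intro hlt.
  destruct (Un_cv_bounds u l ((l - b) / 2) hu) as [N hN]; [lra|].
  specialize (hN N (le_n N)). specialize (hb N). lra.
Qed.

Lemma strictly_increasing_ge_id (phi : nat -> nat) :
  (forall n, (phi n < phi (S n))%nat) -> forall n, (n <= phi n)%nat.
Proof. intros hphi n; induction n; [lia|]. specialize (hphi n). lia. Qed.

Lemma ln_lt_0 (a : R) : 0 < a < 1 -> ln a < 0.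
Proof. intros ha. rewrite <- ln_1. apply ln_increasing; lra. Qed.

Lemma Rpower_decreasing (a x y : R) : 0 < a < 1 -> x < y -> Rpower a y < Rpower a x.
Proof.
  intros ha hxy. pose proof (ln_lt_0 a ha). unfold Rpower.
  apply exp_increasing. nra.
Qed.

Lemma Rpower_log_base (a c : R) : 0 < a < 1 -> 0 < c -> Rpower a (ln c / ln a) = c.
Proof.
  intros ha hc. pose proof (ln_lt_0 a ha). unfold Rpower.
  replace (ln c / ln a * ln a) with (ln c) by (field; lra). now apply exp_ln.
Qed.

Lemma compact2_dv_bounded_below {M : Type} (d : M -> M -> R) (o : M)
  (dv : bnd d o -> bnd d o -> R) (K : bnd d o -> bnd d o -> Prop) :
  (forall xi eta, 0 <= dv xi eta) -> (forall xi eta, dv xi eta = 0 -> xi = eta) ->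
  (forall xi eta, dv xi eta = dv eta xi) ->
  (forall xi eta zeta, dv xi zeta <= dv xi eta + dv eta zeta) ->
  compact2 d o dv K -> exists c, 0 < c /\ forall xi eta, K xi eta -> c <= dv xi eta.
Proof.
  intros hpos hsep hsym htri [hdiag hseq].
  apply NNPP; intro hno.
  assert (hsmall : forall n : nat, exists pq,
             K (fst pq) (snd pq) /\ dv (fst pq) (snd pq) < / INR (S n)).
  { intro n. apply NNPP; intro hn. apply hno. exists (/ INR (S n)). split.
    - apply Rinv_0_lt_compat, lt_0_INR. lia.
    - intros xi eta hK. apply Rnot_lt_le; intro hlt. apply hn. now exists (xi, eta). }
  destruct (choice _ hsmall) as [f hf].
  destruct (hseq (fun n => fst (f n)) (fun n => snd (f n)) (fun n => proj1 (hf n)))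
    as (phi & xi & eta & hphi & hK & hu & hv).
  apply (hdiag xi eta hK), hsep, Rle_antisym; [|apply hpos].
  apply Rle_plus_epsilon; intros eps heps. rewrite Rplus_0_l.
  destruct (archimed_cor1 (eps / 3)) as [N [hN hN0]]; [lra|].
  destruct (hu (eps / 3)) as [N1 h1]; [lra|].
  destruct (hv (eps / 3)) as [N2 h2]; [lra|].
  set (n := Nat.max N (Nat.max N1 N2)).
  specialize (h1 n ltac:(unfold n; lia)). specialize (h2 n ltac:(unfold n; lia)).
  unfold R_dist in h1, h2. rewrite Rminus_0_r, Rabs_pos_eq in h1, h2 by apply hpos.
  assert (hfar : / INR (S (phi n)) <= / INR N).
  { apply Rinv_le_contravar; [apply lt_0_INR; lia|].
    apply le_INR. pose proof (strictly_increasing_ge_id phi hphi n). unfold n in *. lia. }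
  pose proof (proj2 (hf (phi n))) as h3.
  pose proof (htri xi (fst (f (phi n))) eta).
  pose proof (htri (fst (f (phi n))) (snd (f (phi n))) eta).
  rewrite (hsym xi (fst (f (phi n)))) in *. lra.
Qed.

Section VisualMetric.

Context {M : Type} (d : M -> M -> R) (o : M).
Variables (alpha : R) (gp dv : bnd d o -> bnd d o -> R).
Hypothesis Halpha : 0 < alpha < 1.
Hypothesis Hdv : visual_metric d o alpha gp dv.

Lemma visual_metric_gprod_bounded (K : bnd d o -> bnd d o -> Prop) :
  compact2 d o dv K -> exists D, 0 <= D /\ forall xi eta, K xi eta -> gp xi eta <= D.
Proof.
  intros HK. destruct Hdv as (hpos & hsep & hsym & htri & B & hB).
  destruct (compact2_dv_bounded_below d o dv K hpos (fun x y h => proj1 (hsep x y) h)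
              hsym htri HK) as [c [hc hcK]].
  exists (Rabs (ln c / ln alpha) + Rabs B). split.
  { pose proof (Rabs_pos (ln c / ln alpha)). pose proof (Rabs_pos B). lra. }
  intros xi eta hK. destruct (hB xi eta (proj1 HK xi eta hK)) as [b [hb hdv]].
  assert (hle : gp xi eta + b <= ln c / ln alpha).
  { apply Rnot_lt_le; intro hlt. pose proof (hcK xi eta hK) as hc'.
    pose proof (Rpower_decreasing alpha _ _ Halpha hlt).
    rewrite Rpower_log_base in * by assumption. lra. }
  pose proof (Rle_abs (ln c / ln alpha)). pose proof (Rle_abs B). pose proof (Rle_abs (- b)).
  rewrite Rabs_Ropp in *. lra.
Qed.

Lemma visual_metric_lt_of_gprod_ge :
  exists B, 0 <= B /\ forall xi eta L,
    (xi <> eta -> L <= gp xi eta) -> dv xi eta < Rpower alpha (L - B).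
Proof.
  destruct Hdv as (_ & hsep & _ & _ & B & hB).
  exists (Rabs B + 1). split; [pose proof (Rabs_pos B); lra|].
  intros xi eta L hL. destruct (classic (xi = eta)) as [<-|hne].
  - rewrite (proj2 (hsep xi xi) eq_refl). unfold Rpower. apply exp_pos.
  - destruct (hB xi eta hne) as [b [hb ->]]. apply Rpower_decreasing; [assumption|].
    specialize (hL hne). pose proof (Rle_abs B). pose proof (Rle_abs (- b)).
    rewrite Rabs_Ropp in *. lra.
Qed.

End VisualMetric.

Section Hyperbolic.

Context {M : Type} (d : M -> M -> R) (o : M).
Hypothesis HM : is_metric d.
Variable delta : R.
Hypothesis Hdelta : 0 <= delta.
Hypothesis Hfour : forall x y z w,
  Rmin (gprod d w x y) (gprod d w y z) - delta <= gprod d w x z.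
Variable gp : bnd d o -> bnd d o -> R.
Hypothesis Hgp : bnd_gprod_spec d o gp.

Lemma gprod_sym (w x y : M) : gprod d w x y = gprod d w y x.
Proof. destruct HM as (_ & _ & hsym & _). unfold gprod. rewrite (hsym x y). lra. Qed.

Lemma gprod_ge0 (w x y : M) : 0 <= gprod d w x y.
Proof.
  destruct HM as (_ & _ & hsym & htri). unfold gprod.
  pose proof (htri x w y). rewrite (hsym w y) in *. lra.
Qed.

Lemma gprod_change_base (p u v : M) :
  gprod d p u v = gprod d o u v + ((d p u - d o u) + (d p v - d o v)) / 2.
Proof.
  destruct HM as (_ & _ & hsym & _). unfold gprod.
  rewrite (hsym u p), (hsym v p), (hsym u o), (hsym v o). lra.
Qed.

Lemma gprod_ge_chain2 (w a b c : M) (L : R) :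
  L <= gprod d w a b -> L <= gprod d w b c -> L - delta <= gprod d w a c.
Proof.
  intros hab hbc. pose proof (Hfour a b c w). pose proof (Rmin_glb _ _ _ hab hbc). lra.
Qed.

Lemma gprod_ge_chain3 (w a b c e : M) (L : R) :
  L <= gprod d w a b -> L <= gprod d w b c -> L <= gprod d w c e ->
  L - 2 * delta <= gprod d w a e.
Proof.
  intros hab hbc hce.
  assert (hac := gprod_ge_chain2 w a b c L hab hbc).
  assert (hce' : L - delta <= gprod d w c e) by lra.
  pose proof (gprod_ge_chain2 w a c e _ hac hce'). lra.
Qed.

Lemma conv_to_gprod_large (xi : bnd d o) (x x' : nat -> M) :
  conv_to d o xi x -> conv_to d o xi x' ->
  forall L, exists N, forall m n, (N <= m)%nat -> (N <= n)%nat ->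
    L <= gprod d o (x m) (x' n).
Proof.
  intros hx hx' L. destruct (proj2_sig xi) as [z [_ hz]].
  destruct (proj2 (proj1 (hz x) hx) (L + delta)) as [N1 h1].
  destruct (proj2 (proj1 (hz x') hx') (L + delta)) as [N2 h2].
  exists (Nat.max N1 N2). intros m n hm hn.
  assert (hxz : L + delta <= gprod d o (x m) (z (Nat.max N1 N2))).
  { rewrite gprod_sym. apply h1; lia. }
  assert (hzx' : L + delta <= gprod d o (z (Nat.max N1 N2)) (x' n)) by (apply h2; lia).
  pose proof (gprod_ge_chain2 _ _ _ _ _ hxz hzx'). lra.
Qed.

(* The 2 delta is lost comparing x, y with sequences nearly realising the
   infimum in bnd_gprod_spec, by two applications of the four-point condition. *)
Lemma bnd_gprod_ge (xi eta : bnd d o) (x y : nat -> M) (L : R) :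
  xi <> eta -> conv_to d o xi x -> conv_to d o eta y ->
  (forall eps, 0 < eps -> exists N, forall n, (N <= n)%nat ->
     L - eps <= gprod d o (x n) (y n)) ->
  L - 2 * delta <= gp xi eta.
Proof.
  intros hne hx hy hL. apply (proj2 (Hgp xi eta hne)).
  intros v (u & w & hu & hw & _ & hinf).
  apply Rle_plus_epsilon; intros eps heps.
  destruct (hL (eps / 2)) as [N0 h0]; [lra|].
  destruct (conv_to_gprod_large xi u x hu hx (L - eps / 2)) as [N1 h1].
  destruct (conv_to_gprod_large eta y w hy hw (L - eps / 2)) as [N2 h2].
  destruct (hinf (eps / 2) ltac:(lra) (Nat.max N1 N2)) as [n [hn hv]].
  set (m := Nat.max N0 (Nat.max N1 N2)).
  assert (hux : L - eps / 2 <= gprod d o (u n) (x m)) by (apply h1; unfold m; lia).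
  assert (hxy : L - eps / 2 <= gprod d o (x m) (y m)) by (apply h0; unfold m; lia).
  assert (hyw : L - eps / 2 <= gprod d o (y m) (w n)) by (apply h2; unfold m; lia).
  pose proof (gprod_ge_chain3 _ _ _ _ _ _ hux hxy hyw). lra.
Qed.

(* For p = g^-1 o, busemann_spec gives horo_lim p xi (sigma g xi). *)
Definition horo_lim (p : M) (xi : bnd d o) (b : R) : Prop :=
  exists x, conv_to d o xi x /\ Un_cv (fun n => d p (x n) - d o (x n)) b.

Lemma horo_lim_le_dist (p : M) (xi : bnd d o) (b : R) :
  horo_lim p xi b -> b <= d p o.
Proof.
  intros (x & _ & hx). apply (Un_cv_le_bound _ _ _ hx). intro n.
  destruct HM as (_ & _ & _ & htri). pose proof (htri p o (x n)). lra.
Qed.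

(* From (x|z)_p >= 0. *)
Lemma horo_lim_sum_ge (p : M) (xi zeta : bnd d o) (a b : R) :
  xi <> zeta -> horo_lim p xi a -> horo_lim p zeta b ->
  - (a + b) / 2 - 2 * delta <= gp xi zeta.
Proof.
  intros hne (x & hx & ha) (z & hz & hb).
  apply (bnd_gprod_ge xi zeta x z); [assumption..|]. intros eps heps.
  destruct (Un_cv_bounds _ _ eps ha heps) as [N1 h1].
  destruct (Un_cv_bounds _ _ eps hb heps) as [N2 h2].
  exists (Nat.max N1 N2). intros n hn.
  specialize (h1 n ltac:(lia)). specialize (h2 n ltac:(lia)).
  pose proof (gprod_ge0 p (x n) (z n)). rewrite gprod_change_base in *. lra.
Qed.

(* Four-point condition for x, p, z seen from o. *)
Lemma horo_lim_dist_le (p : M) (xi zeta : bnd d o) (a b : R) :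
  xi <> zeta -> horo_lim p xi a -> horo_lim p zeta b ->
  (d p o - Rmax a b) / 2 - 3 * delta <= gp xi zeta.
Proof.
  intros hne (x & hx & ha) (z & hz & hb).
  replace ((d p o - Rmax a b) / 2 - 3 * delta)
    with (((d p o - Rmax a b) / 2 - delta) - 2 * delta) by lra.
  apply (bnd_gprod_ge xi zeta x z); [assumption..|]. intros eps heps.
  destruct (Un_cv_bounds _ _ eps ha heps) as [N1 h1].
  destruct (Un_cv_bounds _ _ eps hb heps) as [N2 h2].
  exists (Nat.max N1 N2). intros n hn.
  specialize (h1 n ltac:(lia)). specialize (h2 n ltac:(lia)).
  pose proof (Rmax_l a b). pose proof (Rmax_r a b).
  pose proof (Hfour (x n) p (z n) o) as h4.
  destruct HM as (_ & _ & hsym & _).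
  assert (hxp : (d p o - Rmax a b) / 2 - eps <= gprod d o (x n) p).
  { unfold gprod. rewrite (hsym (x n) o), (hsym (x n) p). lra. }
  assert (hpz : (d p o - Rmax a b) / 2 - eps <= gprod d o p (z n)).
  { unfold gprod. rewrite (hsym (z n) o). lra. }
  pose proof (Rmin_glb _ _ _ hxp hpz). lra.
Qed.

Section Action.

Variables (G : Type) (mul : G -> G -> G) (one : G) (inv : G -> G).
Variables (act : G -> M -> M) (bact : G -> bnd d o -> bnd d o).
Hypothesis HG : is_group mul one inv.
Hypothesis Hact : isometric_action d mul one act.
Hypothesis Hbact : bnd_action_spec d o act bact.

Lemma gprod_act (g : G) (u v : M) :
  gprod d o (act g u) (act g v) = gprod d (act (inv g) o) u v.
Proof.
  destruct Hact as (hone & hmul & hiso). destruct HG as (_ & _ & _ & hinv & _).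
  assert (ho : forall z, d o (act g z) = d (act (inv g) o) z).
  { intro z. rewrite <- (hiso (inv g)), <- hmul, hinv, hone. reflexivity. }
  destruct HM as (_ & _ & hsym & _). unfold gprod.
  rewrite hiso, (hsym (act g u)), (hsym (act g v)), !ho,
    (hsym u (act (inv g) o)), (hsym v (act (inv g) o)).
  reflexivity.
Qed.

(* (gx|gz)_o = (x|z)_p with p = g^-1 o, and (x|z)_o >= 0. *)
Lemma bact_gprod_ge (g : G) (xi zeta : bnd d o) (a b : R) :
  bact g xi <> bact g zeta ->
  horo_lim (act (inv g) o) xi a -> horo_lim (act (inv g) o) zeta b ->
  (a + b) / 2 - 2 * delta <= gp (bact g xi) (bact g zeta).
Proof.
  intros hne (x & hx & ha) (z & hz & hb).
  apply (bnd_gprod_ge _ _ (fun n => act g (x n)) (fun n => act g (z n)));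
    [assumption | now apply Hbact.. |].
  intros eps heps.
  destruct (Un_cv_bounds _ _ eps ha heps) as [N1 h1].
  destruct (Un_cv_bounds _ _ eps hb heps) as [N2 h2].
  exists (Nat.max N1 N2). intros n hn.
  specialize (h1 n ltac:(lia)). specialize (h2 n ltac:(lia)).
  pose proof (gprod_ge0 o (x n) (z n)). rewrite gprod_act, gprod_change_base. lra.
Qed.

End Action.

End Hyperbolic.

Theorem mainTheorem8
  (M : Type) (d : M -> M -> R) (o : M)
  (G : Type) (mul : G -> G -> G) (one : G) (inv : G -> G) (act : G -> M -> M)
  (bact : G -> bnd d o -> bnd d o)
  (gp : bnd d o -> bnd d o -> R) (sigma : G -> bnd d o -> R)
  (alpha : R) (dv : bnd d o -> bnd d o -> R)
  (HM : is_metric d) (Hhyp : gromov_hyperbolic d) (Hprop : proper_space d)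
  (Hqc : quasi_convex_space d o)
  (HG : is_group mul one inv) (Hcount : countable_type G)
  (Hact : isometric_action d mul one act) (Hpa : proper_action d act o)
  (Hcc : cocompact_action d act o) (Hne : non_elementary_bnd d o)
  (Hbact : bnd_action_spec d o act bact)
  (Hgp : bnd_gprod_spec d o gp) (Hsigma : busemann_spec d o inv act sigma)
  (Halpha : 0 < alpha < 1) (Hdv : visual_metric d o alpha gp dv) :
  forall K : bnd d o -> bnd d o -> Prop, compact2 d o dv K ->
  exists C : R, forall (xi eta eta' : bnd d o) (g : G),
    K xi eta -> K xi eta' -> K (bact g xi) (bact g eta) -> sigma g xi < 0 ->
    let t := - sigma g xi in
    (t - C <= sigma g eta <= t + C) /\ (t - C <= sigma g eta' <= t + C) /\
    dv (bact g eta) (bact g eta') < Rpower alpha (t - C).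
Proof.
  intros K HK. destruct Hhyp as [delta [Hdelta Hfour]].
  destruct (visual_metric_gprod_bounded d o alpha gp dv Halpha Hdv K HK) as [D [HD0 HD]].
  destruct (visual_metric_lt_of_gprod_ge d o alpha gp dv Halpha Hdv) as [B [HB0 HB]].
  exists (4 * D + 10 * delta + B).
  intros xi eta eta' g hK hK' hKg hneg; cbv zeta.
  assert (hs : forall zeta, horo_lim d o (act (inv g) o) zeta (sigma g zeta))
    by (intro zeta; exact (proj2 (Hsigma g zeta))).
  pose proof (horo_lim_sum_ge d o HM delta Hdelta Hfour gp Hgp) as hsum.
  pose proof (horo_lim_dist_le d o HM delta Hdelta Hfour gp Hgp) as hdist.
  pose proof (bact_gprod_ge d o HM delta Hdelta Hfour gp Hgp G mul one inv act bact
                HG Hact Hbact g) as himg.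
  destruct HK as [Hdiag _].
  pose proof (hsum _ xi eta _ _ (Hdiag _ _ hK) (hs xi) (hs eta)).
  pose proof (hsum _ xi eta' _ _ (Hdiag _ _ hK') (hs xi) (hs eta')).
  pose proof (himg xi eta _ _ (Hdiag _ _ hKg) (hs xi) (hs eta)).
  pose proof (hdist _ xi eta _ _ (Hdiag _ _ hK) (hs xi) (hs eta)).
  pose proof (horo_lim_le_dist d o HM _ eta' _ (hs eta')).
  pose proof (HD _ _ hK). pose proof (HD _ _ hK'). pose proof (HD _ _ hKg).
  assert (Rmax (sigma g xi) (sigma g eta) <= - sigma g xi + 2 * D + 4 * delta)
    by (apply Rmax_lub; lra).
  repeat split; try lra.
  replace (- sigma g xi - (4 * D + 10 * delta + B))
    with (- sigma g xi - 4 * D - 10 * delta - B) by ring.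
  apply HB. intro hne. pose proof (himg eta eta' _ _ hne (hs eta) (hs eta')). lra.
Qed.
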